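(* Let $(a_0,a_2)$ be any one of the four pairs $$\Big(1+\tfrac{i}{2}-\tfrac{\sqrt3}{2},\,-i\Big),\ \Big(1+\tfrac{i}{2}+\tfrac{\sqrt3}{2},\,-i\Big),\ \Big(1-\tfrac{i}{2}-\tfrac{\sqrt3}{2},\,i\Big),\ \Big(1-\tfrac{i}{2}+\tfrac{\sqrt3}{2},\,i\Big).$$ Then the second-order recursion $$z_n = \frac{a_2 z_{n-2} + z_{n-1} + a_0}{z_{n-2}}$$ (that is, $z_n = \frac{-2i z_{n-2}+2z_{n-1}+(2\mp\sqrt3+i)}{2z_{n-2}}$ or $z_n = \frac{2i z_{n-2}+2z_{n-1}+(2\mp\sqrt3-i)}{2z_{n-2}}$) is periodic with period $12$: for the sequence defined from indeterminates $z_1,z_2$ one has $z_{13}=z_1$ and $z_{14}=z_2$ in $\mathbb{C}(z_1,z_2)$, hence $z_{n+12}=z_n$ for all $n\ge1$.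
   Context: Let $z_1,z_2$ be independent indeterminates over $\mathbb{C}$, and define $z_n\in\mathbb{C}(z_1,z_2)$ for $n\ge3$ by the given recursion. A second-order recursion is periodic with period $k$ if all iterates are well-defined elements of $\mathbb{C}(z_1,z_2)$ (no denominator identically zero) and $z_{k+1}=z_1$, $z_{k+2}=z_2$; equivalently every complex sequence satisfying the recursion with no vanishing denominator satisfies $z_{n+k}=z_n$ for all $n$. *)

From HB Require Import structures.
From mathcomp Require Import all_boot all_order all_algebra.
From mathcomp Require Export complex.
From mathcomp Require Import Rstruct.
Set Implicit Arguments. Unset Strict Implicit. Unset Printing Implicit Defensive.
Import GRing.Theory Num.Theory.
Local Open Scope ring_scope.

Definition C : numClosedFieldType := complex Rdefinitions.R.

Definition Cz1z2 : fieldType := {fraction {poly {poly C}}}.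

Definition z1 : Cz1z2 := FracField.tofrac (('X : {poly C})%:P).
Definition z2 : Cz1z2 := FracField.tofrac ('X : {poly {poly C}}).

Definition cst (c : C) : Cz1z2 := FracField.tofrac ((c%:P)%:P).

Definition sqrt3 : C := (real_complex Rdefinitions.R (Num.sqrt (3 : Rdefinitions.R))).
Definition iC : C := 'i.

(* The sequence z_n (n >= 1) of the recursion z_n = (a2 z_{n-2} + z_{n-1} + a0) / z_{n-2},
   from z_1 = z1, z_2 = z2.  Index 0 is an unused dummy (set to 0).
   zseq_pair n = (z_{n+1}, z_{n+2}). *)
Fixpoint zseq_pair (a0 a2 : C) (n : nat) : Cz1z2 * Cz1z2 :=
  match n with
  | 0 => (z1, z2)
  | n'.+1 => let (u, v) := zseq_pair a0 a2 n' in
             (v, (cst a2 * u + v + cst a0) / u)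
  end.

Definition zseq (a0 a2 : C) (n : nat) : Cz1z2 :=
  match n with 0 => 0 | n'.+1 => (zseq_pair a0 a2 n').1 end.

(* periodicity with period k in C(z1,z2): all iterates well defined (the
   denominators z_1, z_2, ... are nonzero) and z_{k+1} = z_1, z_{k+2} = z_2 *)
Definition periodic_with (a0 a2 : C) (k : nat) : Prop :=
  (forall n, (1 <= n)%N -> zseq a0 a2 n != 0) /\
  zseq a0 a2 k.+1 = zseq a0 a2 1 /\ zseq a0 a2 k.+2 = zseq a0 a2 2.

From mathcomp Require Import all_boot all_order all_algebra.
From mathcomp Require Import ring zify.
Set Implicit Arguments. Unset Strict Implicit. Unset Printing Implicit Defensive.
Import GRing.Theory Num.Theory.
Local Open Scope ring_scope.

(* Write b = a2 and a = a0.  The four pairs are exactly b = -i or b = i with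
   a = (2 - b + t) / 2 and t ^ 2 = 3, i.e. the solutions of b ^ 2 = -1 and
   a ^ 2 = (2 - b) a + b.  Over any field where these two relations hold, the
   iterates z_3, ..., z_12 of (x, y) are, up to unit constants, quotients
   f f' / (g g') taken from a list of seventeen polynomials of degree at most 2
   in x and y, found by factoring the iterates.  The recursion between
   consecutive closed forms then reduces to polynomial identities modulo the two
   relations, and the closed forms of z_13 and z_14 are x and y.  In C(z1, z2)
   none of the seventeen polynomials vanishes, since each one specializes to 1
   at a suitable point of C^2. *)

Section ClosedForm.
Variables (R : comNzRingType) (a b x y : R).

(* Indices beyond 16 give 1, so that statements can quantify over all [i]. *)
Definition zfactor (i : nat) : R :=
  match i with
  | 0 => x
  | 1 => y
  | 2 => b * x + y + a
  | 3 => b * x * y + (a + b) * x + y + a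
  | 4 => (a + b - 1) * x + b * y + 1
  | 5 => y + a
  | 6 => (a * b - b) * x * y + (a * b - b - 1) * y + a * b - 1
  | 7 => a * x + (a - 1) * y + a + b - a * b
  | 8 => (a + b - 1) * x + (1 + b - a * b) * y + 1
  | 9 => (a * b - 1) * x * y + (a * b - 1) * x + b * y + a * b
  | 10 => x - b
  | 11 => (1 + b) * x * y + y ^+ 2 + x + (a + a * b - 2 * b) * y + a - 1
  | 12 => y - b
  | 13 => x ^+ 2 + (1 - b) * x * y + (a - a * b) * x - b * y - a * b
  | 14 => x * y + (1 + b - a * b) * x + (1 - b) * y - b
  | 15 => x + a * y + a - a * b
  | 16 => x + a
  | _ => 1
  end.

Local Notation f := zfactor.

Definition znum (n : nat) : R :=
  match n with
  | 1 | 13 => x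
  | 2 | 14 => y
  | 3 => f 2
  | 4 => f 3
  | 5 => f 4 * f 5
  | 6 => f 6 * f 7
  | 7 => f 8 * f 9
  | 8 => - a * f 10 * f 11
  | 9 => - a * f 12 * f 13
  | 10 => (a + b) * f 14
  | 11 => f 15
  | 12 => f 16
  | _ => 0
  end.

Definition zden (n : nat) : R :=
  match n with
  | 3 => f 0
  | 4 => f 0 * f 1
  | 5 => f 1 * f 2
  | 6 => f 2 * f 3
  | 7 => f 3 * f 4
  | 8 => f 4 * f 6
  | 9 => f 6 * f 8
  | 10 => f 8 * f 10
  | 11 => f 10 * f 12
  | 12 => f 12
  | _ => 1
  end.

Hypotheses (hb : b ^+ 2 = -1) (ha : a ^+ 2 = (2 - b) * a + b).

Lemma zcross_recurrence n : (0 < n <= 12)%N ->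
  znum n.+2 * znum n * zden n.+1 =
  zden n.+2 * (b * znum n * zden n.+1 + znum n.+1 * zden n + a * zden n * zden n.+1).
Proof.
case/andP; do 13?[case: n => [//|n]]; last by rewrite !ltnS ltn0.
all: by move=> _ _; rewrite /= /zfactor /=; ring: hb ha.
Qed.

End ClosedForm.

Arguments zfactor : simpl never.

Lemma rmorph_zfactor (R S : comNzRingType) (g : {rmorphism R -> S}) a b x y i :
  g (zfactor a b x y i) = zfactor (g a) (g b) (g x) (g y) i.
Proof.
by do 17?[case: i => [|i]];
  rewrite /zfactor /= ?(rmorphD, rmorphB, rmorphN, rmorphM, rmorphXn, rmorph1, rmorph_nat).
Qed.

Definition zfactor_point (R : comNzRingType) (a b : R) (i : nat) : R * R :=
  match i with
  | 0 => (1, 0)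
  | 1 => (0, 1)
  | 2 | 3 | 5 => (0, 1 - a)
  | 6 => (0, b - a - a * b)
  | 7 => (0, b - 1)
  | 9 => (-1, 0)
  | 10 => (1 + b, 0)
  | 11 => (- a, 1 + b)
  | 12 => (0, 1 + b)
  | 13 => (0, b - a)
  | 14 => (0, b)
  | 15 => (1, b - 1)
  | 16 => (1 - a, 0)
  | _ => (0, 0)
  end.

Lemma zfactor_at_point (R : comNzRingType) (a b : R) i :
  b ^+ 2 = -1 -> a ^+ 2 = (2 - b) * a + b ->
  zfactor a b (zfactor_point a b i).1 (zfactor_point a b i).2 i = 1.
Proof. by move=> hb ha; do 17?[case: i => [|i]]; rewrite /zfactor /=; ring: hb ha. Qed.

Lemma iter_modn (T : Type) (g : T -> T) (k n : nat) (p : T) :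
  iter k g p = p -> iter n g p = iter (n %% k) g p.
Proof. by move=> gkp; rewrite {1}(divn_eq n k) addnC iterD iterM (iter_fix _ gkp). Qed.

Lemma frac_recurrence (F : fieldType) (a b p q p1 q1 p2 q2 : F) :
  p != 0 -> q != 0 -> q1 != 0 -> q2 != 0 ->
  p2 * p * q1 = q2 * (b * p * q1 + p1 * q + a * q * q1) ->
  (b * (p / q) + p1 / q1 + a) / (p / q) = p2 / q2.
Proof.
move=> p0 q0 q10 q20 cross.
have -> : (b * (p / q) + p1 / q1 + a) / (p / q) =
          (b * p * q1 + p1 * q + a * q * q1) / (p * q1).
  by field; rewrite q10 p0 q0.
by apply/eqP; rewrite eqr_div ?mulf_neq0 // mulrA cross mulrC.
Qed.

Section Orbit.
Variables (F : fieldType) (a b : F).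

Definition rec_step (p : F * F) : F * F := (p.2, (b * p.1 + p.2 + a) / p.1).

Hypotheses (hb : b ^+ 2 = -1) (ha : a ^+ 2 = (2 - b) * a + b).
Variables (x y : F).
Hypothesis zfactor_neq0 : forall i, zfactor a b x y i != 0.

Lemma zden_neq0 n : zden a b x y n != 0.
Proof. by do 13?[case: n => [|n]]; rewrite /= ?mulf_neq0 ?oner_neq0 ?zfactor_neq0. Qed.

Lemma znum_neq0 n : (0 < n < 15)%N -> znum a b x y n != 0.
Proof.
have a0 : a != 0.
  by rewrite -unitfE; apply/unitrPr; exists (1 + 2 * b - a * b); ring: hb ha.
have ab0 : a + b != 0.
  by rewrite -unitfE; apply/unitrPr; exists (a * b - 2 * b); ring: hb ha.
have x0 : x != 0 := zfactor_neq0 0.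
have y0 : y != 0 := zfactor_neq0 1.
case/andP; do 15?[case: n => [//|n]]; last by rewrite !ltnS ltn0.
all: by move=> _ _; rewrite /= ?mulf_neq0 ?oppr_eq0 ?zfactor_neq0.
Qed.

Definition zfrac (n : nat) : F := znum a b x y n / zden a b x y n.

Lemma iter_rec_step_zfrac n : (n <= 12)%N -> iter n rec_step (x, y) = (zfrac n.+1, zfrac n.+2).
Proof.
elim: n => [|n IHn] hn; first by rewrite /zfrac /= !divr1.
rewrite iterS IHn; last exact: ltnW.
congr pair; apply: frac_recurrence; rewrite ?zden_neq0 //.
- by rewrite znum_neq0 //; lia.
- by apply: zcross_recurrence => //; lia.
Qed.

Lemma iter12_rec_step : iter 12 rec_step (x, y) = (x, y).
Proof. by rewrite iter_rec_step_zfrac // /zfrac /= !divr1. Qed.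

Lemma iter_rec_step_neq0 n : (iter n rec_step (x, y)).1 != 0.
Proof.
have n12 : (n %% 12 < 12)%N by rewrite ltn_pmod.
rewrite (iter_modn _ iter12_rec_step) iter_rec_step_zfrac; last exact: ltnW.
by rewrite mulf_neq0 ?invr_eq0 ?zden_neq0 // znum_neq0 //; lia.
Qed.

End Orbit.

Lemma cstE (c : C) : cst c = (@FracField.tofrac _ \o @polyC {poly C} \o @polyC C) c.
Proof. by []. Qed.

Lemma zfactor_z1z2_neq0 (a b : C) i :
  b ^+ 2 = -1 -> a ^+ 2 = (2 - b) * a + b -> zfactor (cst a) (cst b) z1 z2 i != 0.
Proof.
move=> hb ha; set P := zfactor (a%:P%:P) (b%:P%:P) ('X%:P) 'X i.
have -> : zfactor (cst a) (cst b) z1 z2 i = FracField.tofrac P by rewrite rmorph_zfactor.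
rewrite tofrac_eq0; apply: contra_neq (oner_neq0 C) => P0.
case: (zfactor_point a b i) (zfactor_at_point i hb ha) => x0 y0 /= <-.
have := congr1 (horner_eval x0 \o horner_eval y0%:P) P0.
by rewrite rmorph_zfactor rmorph0 /= /horner_eval /= !hornerE.
Qed.

Lemma zseq_pairE (a0 a2 : C) n :
  zseq_pair a0 a2 n = iter n (rec_step (cst a0) (cst a2)) (z1, z2).
Proof. by elim: n => //= n ->; case: (iter n _ _). Qed.

Lemma zseqE (a0 a2 : C) n :
  zseq a0 a2 n.+1 = (iter n (rec_step (cst a0) (cst a2)) (z1, z2)).1.
Proof. by rewrite -zseq_pairE. Qed.

Lemma periodic_with_12 (a b : C) : b ^+ 2 = -1 -> a ^+ 2 = (2 - b) * a + b ->
  periodic_with a b 12 /\ (forall n, (1 <= n)%N -> zseq a b (n + 12) = zseq a b n).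
Proof.
move=> hb ha.
have hb' : cst b ^+ 2 = -1 by rewrite !cstE -rmorphXn hb rmorphN1.
have ha' : cst a ^+ 2 = (2 - cst b) * cst a + cst b.
  by rewrite !cstE -rmorphXn ha rmorphD rmorphM rmorphB rmorph_nat.
have hf i := zfactor_z1z2_neq0 i hb ha.
have per := iter12_rec_step hb' ha' hf.
split; [split; [|split]|].
- by case=> // n _; rewrite zseqE iter_rec_step_neq0.
- by rewrite !zseqE per.
- by rewrite !zseqE iterS per.
- by case=> // n _; rewrite addSn !zseqE iterD per.
Qed.

Lemma sqrt3_sqr : sqrt3 ^+ 2 = 3.
Proof. by rewrite /sqrt3 -rmorphXn sqr_sqrtr ?ler0n // rmorph_nat. Qed.

Theorem mainTheorem2 (a0 a2 : C) :
  (a0, a2) \in [:: (1 + iC / 2 - sqrt3 / 2, - iC);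
                   (1 + iC / 2 + sqrt3 / 2, - iC);
                   (1 - iC / 2 - sqrt3 / 2, iC);
                   (1 - iC / 2 + sqrt3 / 2, iC)] ->
  periodic_with a0 a2 12 /\
  (forall n, (1 <= n)%N -> zseq a0 a2 (n + 12) = zseq a0 a2 n).
Proof.
have hi : iC ^+ 2 = -1 := sqrCi _.
have hs := sqrt3_sqr.
have h2 : (2 : C) != 0 by rewrite pnatr_eq0.
by rewrite !inE => /or4P[] /eqP[-> ->]; apply: periodic_with_12; field: hi hs.
Qed.
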